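(* There is an absolute constant $C>0$ such that the following holds. Let $\mathbf T:\{0,1\}^n\to\{0,1\}$ be a size-$s$ stochastic decision tree. For every $\varepsilon\in(0,1/2)$ there is a deterministic decision tree $T^\star_{\mathrm{trunc}}:\{0,1\}^n\to\{0,1\}$ such that (1) $\mathrm{depth}(T^\star_{\mathrm{trunc}})\le C\log(s/\varepsilon)/\varepsilon^2$, and (2) $\Pr_{\mathbf x,\mathbf T}[T^\star_{\mathrm{trunc}}(\mathbf x)\neq\mathbf T(\mathbf x)]\le\mathrm{opt}_{\mathbf T}+3\varepsilon$, where $\mathbf x$ is uniform on $\{0,1\}^n$.
   Context: A stochastic decision tree (DT) $\mathbf{T}$ over $\{0,1\}^n$ is a rooted binary tree whose internal nodes are either deterministic nodes, each labeled by a variable $x_i$ ($i\in[n]$) with one outgoing edge followed when $x_i=0$ and one when $x_i=1$, or stochastic nodes, each with two outgoing edges followed with probabilities $p$ and $1-p$ (for a node-specific $p\in[0,1]$, using fresh independent randomness at each node), and whose leaves are labeled $0$ or $1$. On input $x$, $\mathbf{T}(x)$ is the (random) label of the leaf reached. A deterministic DT is one with no stochastic nodes. The size of a DT is its number of leaves; its depth is the maximum number of internal nodes on a root-to-leaf path. The mean function is $\mu_{\mathbf T}(x)=\Pr[\mathbf T(x)=1]$, $\mathrm{round}(t)=\mathbb 1[t\ge1/2]$, and $\mathrm{opt}_{\mathbf T}=\mathbb E_{\mathbf x}\Pr_{\mathbf T}[\mathbf T(\mathbf x)\ne\mathrm{round}(\mu_{\mathbf T}(\mathbf x))]$ is the Bayes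 optimal error. *)

From HB Require Import structures.
From mathcomp Require Import all_boot all_order all_algebra.
From mathcomp Require Import Rstruct.
From Stdlib Require Import Reals.
Set Implicit Arguments. Unset Strict Implicit. Unset Printing Implicit Defensive.
Import Order.TTheory GRing.Theory Num.Theory.
Local Open Scope ring_scope.

Definition input (n : nat) := {ffun 'I_n -> bool}.

(* Stochastic decision trees over {0,1}^n.
   SNode i l r : follow l when x_i = 0, r when x_i = 1.
   SCoin p l r : follow l with probability p, r with probability 1 - p. *)
Inductive sdt (n : nat) : Type :=
| SLeaf of bool
| SNode of 'I_n & sdt n & sdt n
| SCoin of R & sdt n & sdt n.

Fixpoint sdt_wf n (T : sdt n) : Prop :=
  match T with
  | SLeaf _ => True
  | SNode _ l r => sdt_wf l /\ sdt_wf r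
  | SCoin p l r => (0 <= p <= 1) /\ sdt_wf l /\ sdt_wf r
  end.

Fixpoint sdt_size n (T : sdt n) : nat :=
  match T with
  | SLeaf _ => 1
  | SNode _ l r => sdt_size l + sdt_size r
  | SCoin _ l r => sdt_size l + sdt_size r
  end.

(* mean function mu_T(x) = Pr[T(x) = 1] *)
Fixpoint mu n (T : sdt n) (x : input n) : R :=
  match T with
  | SLeaf b => (b : nat)%:R
  | SNode i l r => if x i then mu r x else mu l x
  | SCoin p l r => p * mu l x + (1 - p) * mu r x
  end.

Inductive dt (n : nat) : Type :=
| Leaf of bool
| Node of 'I_n & dt n & dt n.

Fixpoint dt_eval n (T : dt n) (x : input n) : bool :=
  match T with
  | Leaf b => b
  | Node i l r => if x i then dt_eval r x else dt_eval l x
  end.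

Fixpoint dt_depth n (T : dt n) : nat :=
  match T with
  | Leaf _ => 0
  | Node _ l r => (maxn (dt_depth l) (dt_depth r)).+1
  end.

Definition round (t : R) : bool := (2^-1 <= t).

(* Pr_T[T(x) <> b] for a fixed bit b *)
Definition disagree n (T : sdt n) (x : input n) (b : bool) : R :=
  if b then 1 - mu T x else mu T x.

Definition Ex n (f : input n -> R) : R :=
  ((2 ^+ n)^-1 : R) * \sum_(x : input n) f x.

Definition opt n (T : sdt n) : R := Ex (fun x => disagree T x (round (mu T x))).

(* Pr_{x,T}[T'(x) <> T(x)] for deterministic T' *)
Definition err n (T' : dt n) (T : sdt n) : R := Ex (fun x => disagree T x (dt_eval T' x)).

From HB Require Import structures.
From mathcomp Require Import all_boot all_order all_algebra.
From mathcomp Require Import Rstruct.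
From Stdlib Require Import Reals.
From mathcomp Require Import ring lra.
Import Order.TTheory GRing.Theory Num.Theory.
Local Open Scope ring_scope.
Set Implicit Arguments. Unset Strict Implicit. Unset Printing Implicit Defensive.

(* 1. Pruning.  [prune T k] cuts every path of T after k queries of fresh
      variables.  Its mean function differs from mu_T at x by at most the
      probability [reach T k x] of hitting a cut, and since each fresh query
      halves the set of consistent inputs, E_x[reach] <= s / 2^k.
   2. Mixtures.  Resolving all coins in advance writes a stochastic tree with at
      most k queries per path as a convex combination [sdist] of deterministic
      trees of depth <= k, with the same mean function.
   3. Sampling.  Rounding the average of m independent draws from the mixture
      loses at most 2 eps against rounding the mean, as soon as 4 m eps^2 >= 1
      (second-moment bound); hence some fixed choice of m trees does, and running
      them one after the other and voting ([run_all]) is a tree of depth m k.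
   With 2^k ~ 2 s/eps and m ~ 1/(4 eps^2), both powers of two, pruning costs
   eps/2 twice (in the error and in the Bayes error) and sampling 2 eps. *)

Section Composition.
Variable n : nat.

Fixpoint graft (t : dt n) (k : bool -> dt n) : dt n :=
  match t with
  | Leaf b => k b
  | Node i l r => Node i (graft l k) (graft r k)
  end.

Lemma graft_eval t k x : dt_eval (graft t k) x = dt_eval (k (dt_eval t x)) x.
Proof. by elim: t => [b|i l IHl r IHr] //=; case: (x i). Qed.

Lemma graft_depth t k :
  (dt_depth (graft t k) <= dt_depth t + maxn (dt_depth (k false)) (dt_depth (k true)))%nat.
Proof.
elim: t => [[]|i l IHl r IHr] /=; rewrite ?leq_maxl ?leq_maxr //.
rewrite addSn ltnS geq_max; apply/andP; split.
  by apply: (leq_trans IHl); rewrite leq_add2r leq_maxl.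
by apply: (leq_trans IHr); rewrite leq_add2r leq_maxr.
Qed.

Fixpoint run_all (ts : seq (dt n)) (g : seq bool -> bool) : dt n :=
  match ts with
  | [::] => Leaf n (g [::])
  | t :: ts' => graft t (fun b => run_all ts' (fun bs => g (b :: bs)))
  end.

Lemma run_all_eval ts g x : dt_eval (run_all ts g) x = g [seq dt_eval t x | t <- ts].
Proof. by elim: ts g => [|t ts IH] g //=; rewrite graft_eval IH. Qed.

Lemma run_all_depth ts g : (dt_depth (run_all ts g) <= \sum_(t <- ts) dt_depth t)%nat.
Proof.
elim: ts g => [|t ts IH] g /=; first by rewrite big_nil.
rewrite big_cons; apply: (leq_trans (graft_depth _ _)).
by rewrite leq_add2l geq_max !IH.
Qed.

End Composition.

Section Expectation.
Variable n : nat.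
Implicit Types g h e : input n -> R.

Lemma two_pow_neq0 : (2 ^+ n : R) != 0.
Proof. by rewrite expf_neq0 // pnatr_eq0. Qed.

Lemma ExE g : Ex g = (2 ^+ n)^-1 * \sum_x g x.
Proof. by []. Qed.

Lemma Ex_ext g h : (forall x, g x = h x) -> Ex g = Ex h.
Proof. by move=> gh; rewrite !ExE; congr (_ * _); apply: eq_bigr. Qed.

Lemma Ex_cst (a : R) : Ex (fun _ : input n => a) = a.
Proof.
rewrite ExE sumr_const card_ffun card_bool card_ord -[a *+ _]mulr_natr natrX.
by rewrite mulrCA mulVf ?mulr1 // two_pow_neq0.
Qed.

Lemma Ex_leD g h e : (forall x, g x <= h x + e x) -> Ex g <= Ex h + Ex e.
Proof.
move=> ghe; rewrite !ExE -mulrDr -big_split /=.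
by apply: ler_wpM2l; [rewrite invr_ge0 exprn_ge0 | apply: ler_sum].
Qed.

Lemma Ex_le_cst g h (a : R) : (forall x, g x <= h x + a) -> Ex g <= Ex h + a.
Proof. by move=> gha; rewrite -[a in _ + a]Ex_cst; apply: Ex_leD. Qed.

End Expectation.

Section Pruning.
Variable n : nat.
Implicit Types (T : sdt n) (x : input n).

(* Unfolding equations for stochastic nodes (simplification would expose the
   underlying Stdlib operations on R). *)
Lemma mu_coin p l r x : mu (SCoin p l r) x = p * mu l x + (1 - p) * mu r x.
Proof. by []. Qed.

Lemma mu01 T x : sdt_wf T -> 0 <= mu T x <= 1.
Proof.
elim: T => [b|i l IHl r IHr|p l IHl r IHr].
- by case: b => _; rewrite ?ler01 ?lexx.
- by case=> /IHl ? /IHr ? /=; case: (x i).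
- case=> /andP[p0 p1] [/IHl /andP[a0 a1] /IHr /andP[b0 b1]]; rewrite mu_coin.
  have h1 := mulr_ge0 p0 a0.
  have h2 : 0 <= (1 - p) * mu r x by apply: mulr_ge0 => //; lra.
  have h3 : 0 <= p * (1 - mu l x) by apply: mulr_ge0 => //; lra.
  have h4 : 0 <= (1 - p) * (1 - mu r x) by apply: mulr_ge0; lra.
  apply/andP; split; lra.
Qed.

Lemma sdt_size_gt0 T : (0 < sdt_size T)%nat.
Proof. by elim: T => [b|i l IHl r IHr|p l IHl r IHr] //=; rewrite addn_gt0 IHl. Qed.

(* A restriction records the variables already queried on the current path. *)
Definition restriction := seq ('I_n * bool).

Fixpoint lookup (rho : restriction) (i : 'I_n) : option bool :=
  match rho with
  | [::] => None
  | (j, b) :: rho' => if j == i then Some b else lookup rho' i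
  end.

Definition consistent x (rho : restriction) := all (fun p => x p.1 == p.2) rho.

Lemma lookup_consistent x rho i b : consistent x rho -> lookup rho i = Some b -> x i = b.
Proof.
elim: rho => [|[j c] rho IH] //= /andP[/eqP xj xrho].
by case: eqP => [<- [<-] | _] //; apply: IH.
Qed.

Fixpoint prune T (k : nat) (rho : restriction) : sdt n :=
  match T with
  | SLeaf b => SLeaf n b
  | SNode i l r =>
      match lookup rho i with
      | Some b => if b then prune r k rho else prune l k rho
      | None => match k with
                | 0 => SLeaf n false
                | k'.+1 => SNode i (prune l k' ((i, false) :: rho))
                                   (prune r k' ((i, true) :: rho))
                end
      end
  | SCoin p l r => SCoin p (prune l k rho) (prune r k rho)
  end.

(* [reach T k rho x]: probability that T on input x hits a cut of the pruning. *)
Fixpoint reach T (k : nat) (rho : restriction) x : R :=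
  match T with
  | SLeaf b => 0
  | SNode i l r =>
      match lookup rho i with
      | Some b => if b then reach r k rho x else reach l k rho x
      | None => match k with
                | 0 => 1
                | k'.+1 => if x i then reach r k' ((i, true) :: rho) x
                           else reach l k' ((i, false) :: rho) x
                end
      end
  | SCoin p l r => p * reach l k rho x + (1 - p) * reach r k rho x
  end.

Lemma reach_coin p l r k rho x :
  reach (SCoin p l r) k rho x = p * reach l k rho x + (1 - p) * reach r k rho x.
Proof. by []. Qed.

Lemma prune_wf T k rho : sdt_wf T -> sdt_wf (prune T k rho).
Proof.
elim: T k rho => [b|i l IHl r IHr|p l IHl r IHr] k rho //=.
- case=> wl wr; case: (lookup rho i) => [[]|]; auto.
  by case: k => [|k] //=; split; auto.
- by case=> pp [wl wr]; split => //; split; auto.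
Qed.

Lemma prune_err T k rho x : sdt_wf T -> consistent x rho ->
  `|mu T x - mu (prune T k rho) x| <= reach T k rho x.
Proof.
elim: T k rho => [b|i l IHl r IHr|p l IHl r IHr] k rho.
- by rewrite subrr normr0.
- case=> wl wr xrho /=; case E: (lookup rho i) => [b|].
    by rewrite (lookup_consistent xrho E); case: b E => E; auto.
  case: k => [|k] /=.
    have /andP[m0 m1] : 0 <= (if x i then mu r x else mu l x) <= 1.
      by case: (x i); apply: mu01.
    by rewrite subr0 ger0_norm.
  by case xi: (x i); [apply: IHr | apply: IHl]; rewrite //= xi ?eqxx.
- case=> /andP[p0 p1] [wl wr] xrho; rewrite [prune _ _ _]/= !mu_coin reach_coin.
  have q0 : 0 <= 1 - p by lra.
  rewrite (_ : _ - _ = p * (mu l x - mu (prune l k rho) x) +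
                       (1 - p) * (mu r x - mu (prune r k rho) x)); last by ring.
  apply: (le_trans (ler_normD _ _)).
  rewrite !normrM (ger0_norm p0) (ger0_norm q0).
  by apply: lerD; apply: ler_wpM2l; auto.
Qed.

Definition cnt (rho : restriction) : R := \sum_(x | consistent x rho) 1.

Lemma cnt_ge0 rho : 0 <= cnt rho.
Proof. by apply: sumr_ge0 => x _; rewrite ler01. Qed.

Lemma cnt_nil : cnt [::] = 2 ^+ n.
Proof. by rewrite /cnt sumr_const card_ffun card_bool card_ord -natrX. Qed.

Definition flip (i : 'I_n) x : input n := [ffun j => if j == i then ~~ x j else x j].

Lemma flipK i : involutive (flip i).
Proof.
by move=> x; apply/ffunP => j; rewrite !ffunE; case: eqP => // ->; rewrite ?eqxx negbK.
Qed.

Lemma consistent_flip rho i x :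
  lookup rho i = None -> consistent (flip i x) rho = consistent x rho.
Proof.
elim: rho => [|[j c] rho IH] //=.
by case: eqP => // /eqP ji /IH ->; rewrite ffunE (negbTE ji).
Qed.

Lemma cnt_half rho i b : lookup rho i = None -> cnt ((i, b) :: rho) = cnt rho / 2.
Proof.
move=> fresh.
pose half c := \sum_(x | consistent x rho && (x i == c)) (1 : R).
have half_eq : half true = half false.
  rewrite /half (reindex_inj (inv_inj (flipK i))) /=.
  by apply: eq_bigl => x; rewrite consistent_flip // ffunE eqxx; case: (x i).
have -> : cnt ((i, b) :: rho) = half b.
  by apply: eq_bigl => x; rewrite /consistent /= andbC.
have -> : cnt rho = half true + half false.
  by rewrite /cnt (bigID (fun x => x i)); congr (_ + _); apply: eq_bigl => x;
     case: (x i); rewrite ?andbT ?andbF.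
by case: b; rewrite half_eq; field.
Qed.

Lemma sum_split_query rho i (F G : input n -> R) :
  \sum_(x | consistent x rho) (if x i then F x else G x) =
  \sum_(x | consistent x ((i, true) :: rho)) F x +
  \sum_(x | consistent x ((i, false) :: rho)) G x.
Proof.
rewrite (bigID (fun x => x i)) /=; congr (_ + _).
  apply: eq_big => [x | x /andP[_ ->]] //.
  by rewrite /consistent /= andbC; case: (x i).
apply: eq_big => [x | x /andP[_ /negbTE ->]] //.
by rewrite /consistent /= andbC; case: (x i).
Qed.

(* Summed over the inputs consistent with rho, the probability of hitting a cut
   is at most size T / 2^k times their number: each cut lies below k fresh
   queries, each of which halves the consistent inputs. *)
Lemma reach_sum T k rho : sdt_wf T ->
  \sum_(x | consistent x rho) reach T k rho x <= (sdt_size T)%:R / 2 ^+ k * cnt rho.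
Proof.
elim: T k rho => [b|i l IHl r IHr|p l IHl r IHr] k rho.
- by move=> _; rewrite big1 // !mulr_ge0 ?cnt_ge0 // invr_ge0 exprn_ge0.
- case=> wl wr /=; case E: (lookup rho i) => [b|].
    apply: le_trans (_ : (sdt_size (if b then r else l))%:R / 2 ^+ k * cnt rho <= _).
      by case: b {E}; auto.
    apply: ler_wpM2r; first exact: cnt_ge0.
    apply: ler_wpM2r; first by rewrite invr_ge0 exprn_ge0.
    by rewrite ler_nat; case: b {E}; rewrite ?leq_addr ?leq_addl.
  case: k => [|k].
    rewrite expr0 invr1 mulr1 -[X in X <= _]mul1r.
    by apply: ler_wpM2r; rewrite ?cnt_ge0 // ler1n addn_gt0 sdt_size_gt0.
  rewrite sum_split_query; apply: le_trans (lerD (IHr k _ wr) (IHl k _ wl)) _.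
  by rewrite !cnt_half // natrD exprS invfM le_eqVlt; apply/orP; left; apply/eqP; ring.
- case=> /andP[p0 p1] [wl wr].
  under eq_bigr do rewrite reach_coin.
  rewrite big_split /= -!mulr_sumr.
  have hl := IHl k rho wl; have hr := IHr k rho wr.
  have Z0 : 0 <= (2 ^+ k)^-1 * cnt rho by rewrite mulr_ge0 ?cnt_ge0 // invr_ge0 exprn_ge0.
  rewrite [sdt_size _]/= natrD -!mulrA in hl hr *.
  set Z := (2 ^+ k)^-1 * cnt rho in Z0 hl hr *.
  have el := ler_wpM2l p0 hl.
  have er : 0 <= 1 - p by lra.
  have {}er := ler_wpM2l er hr.
  have sl : 0 <= (sdt_size l)%:R * Z by rewrite mulr_ge0.
  have sr : 0 <= (sdt_size r)%:R * Z by rewrite mulr_ge0.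
  nra.
Qed.

Lemma Ex_reach T k : sdt_wf T -> Ex (reach T k [::]) <= (sdt_size T)%:R / 2 ^+ k.
Proof.
move=> wT; rewrite ExE.
apply: le_trans (ler_wpM2l _ (reach_sum k [::] wT)) _; first by rewrite invr_ge0 exprn_ge0.
by rewrite cnt_nil mulrCA mulVf ?mulr1 // two_pow_neq0.
Qed.

End Pruning.

Section Mixture.
Variable n : nat.
Implicit Types (T : sdt n) (x : input n).

Fixpoint query_depth T : nat :=
  match T with
  | SLeaf _ => 0
  | SNode _ l r => (maxn (query_depth l) (query_depth r)).+1
  | SCoin _ l r => maxn (query_depth l) (query_depth r)
  end.

Lemma query_depth_prune T k rho : (query_depth (prune T k rho) <= k)%nat.
Proof.
elim: T k rho => [b|i l IHl r IHr|p l IHl r IHr] k rho //=; last by rewrite geq_max IHl IHr.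
case: (lookup rho i) => [[]|]; auto.
by case: k => [|k] //=; rewrite ltnS geq_max IHl IHr.
Qed.

(* [sdist T]: deterministic trees, each with the probability that T behaves like
   it, obtained by resolving every coin of T in advance. *)
Fixpoint sdist T : seq (R * dt n) :=
  match T with
  | SLeaf b => [:: (1, Leaf n b)]
  | SNode i l r => [seq (a.1 * c.1, Node i a.2 c.2) | a <- sdist l, c <- sdist r]
  | SCoin p l r => [seq (p * a.1, a.2) | a <- sdist l] ++
                   [seq ((1 - p) * a.1, a.2) | a <- sdist r]
  end.

Lemma all_allpairs (A B C : Type) (PA : pred A) (PB : pred B) (P : pred C)
    (f : A -> B -> C) s t :
  all PA s -> all PB t -> (forall a b, PA a -> PB b -> P (f a b)) ->
  all P [seq f a b | a <- s, b <- t].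
Proof.
move=> sA tB fP; elim: s sA => [|a s IH] //= /andP[aA sA].
by rewrite all_cat IH // andbT all_map; apply: sub_all tB => b /fP; apply.
Qed.

Lemma sdist_ge0 T : sdt_wf T -> all (fun a => 0 <= a.1) (sdist T).
Proof.
elim: T => [b|i l IHl r IHr|p l IHl r IHr] /=; first by rewrite ler01.
  by case=> /IHl hl /IHr hr; apply: (all_allpairs hl hr) => a c; apply: mulr_ge0.
case=> /andP[p0 p1] [/IHl hl /IHr hr]; have q0 : 0 <= 1 - p by lra.
rewrite all_cat !all_map; apply/andP; split.
  by apply: sub_all hl => a; apply: mulr_ge0.
by apply: sub_all hr => a; apply: mulr_ge0.
Qed.

Lemma sdist_depth T : all (fun a => dt_depth a.2 <= query_depth T)%nat (sdist T).
Proof.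
elim: T => [b|i l IHl r IHr|p l IHl r IHr] //=.
  apply: (all_allpairs IHl IHr) => a c /= ha hc.
  by rewrite ltnS geq_max (leq_trans ha (leq_maxl _ _)) (leq_trans hc (leq_maxr _ _)).
rewrite all_cat !all_map; apply/andP; split.
  by apply: sub_all IHl => a /= /leq_trans; apply; rewrite leq_maxl.
by apply: sub_all IHr => a /= /leq_trans; apply; rewrite leq_maxr.
Qed.

Lemma sdist_sum1 T : \sum_(a <- sdist T) a.1 = 1.
Proof.
elim: T => [b|i l IHl r IHr|p l IHl r IHr] /=; first by rewrite big_seq1.
  rewrite big_allpairs_dep /=.
  by under eq_bigr do rewrite -mulr_sumr IHr mulr1.
by rewrite big_cat !big_map /= -!mulr_sumr IHl IHr; ring.
Qed.

Lemma sdist_mu T x : \sum_(a <- sdist T) a.1 * (dt_eval a.2 x : nat)%:R = mu T x.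
Proof.
elim: T => [b|i l IHl r IHr|p l IHl r IHr].
- by rewrite big_seq1 mul1r.
- rewrite big_allpairs_dep /=; case: (x i).
    transitivity (\sum_(a <- sdist l) a.1 * mu r x).
      apply: eq_bigr => a _; rewrite -IHr mulr_sumr.
      by apply: eq_bigr => c _; rewrite mulrA.
    by rewrite -mulr_suml sdist_sum1 mul1r.
  rewrite -IHl; apply: eq_bigr => a _.
  rewrite -[RHS]mulr1 -[X in _ = _ * X](sdist_sum1 r) mulr_sumr; apply: eq_bigr => c _.
  by rewrite mulrAC.
- rewrite mu_coin -IHl -IHr /= big_cat !big_map /= !mulr_sumr.
  by congr (_ + _); apply: eq_bigr => a _; rewrite mulrA.
Qed.

End Mixture.

Lemma exists_le_avg (I : finType) (W G : I -> R) :
  (forall i, 0 <= W i) -> \sum_i W i = 1 -> exists i, G i <= \sum_i W i * G i.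
Proof.
move=> W0 W1; have [i0 _ | I0] := pickP (@predT I); last first.
  by move: W1; rewrite big_pred0 // => /eqP; rewrite eq_sym oner_eq0.
exists [arg min_(i < i0) G i]%O; case: arg_minP => // i _ Gmin.
rewrite -[G i]mul1r -W1 mulr_suml; apply: ler_sum => j _.
by apply: ler_wpM2l => //; apply: Gmin.
Qed.

Definition coin_err (mu : R) (b : bool) : R := if b then 1 - mu else mu.

Lemma coin_err_round mu b : coin_err mu (round mu) <= coin_err mu b.
Proof. by rewrite /coin_err /round; case: b; case: (lerP 2^-1 mu) => h; lra. Qed.

Lemma coin_err_round_approx mu a eps : 0 < eps ->
  coin_err mu (round a) <= coin_err mu (round mu) + ((a - mu) ^+ 2 / eps + eps).
Proof.
move=> e0; set y := a - mu.
have sq_minus : 0 <= y ^+ 2 / eps + eps - 2 * y.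
  rewrite (_ : _ - _ = (y - eps) ^+ 2 / eps); last by field; rewrite gt_eqF.
  by rewrite divr_ge0 ?sqr_ge0 ?ltW.
have sq_plus : 0 <= y ^+ 2 / eps + eps + 2 * y.
  rewrite (_ : _ + 2 * y = (y + eps) ^+ 2 / eps); last by field; rewrite gt_eqF.
  by rewrite divr_ge0 ?sqr_ge0 ?ltW.
rewrite /coin_err /round /y in sq_minus sq_plus *.
by case: (lerP 2^-1 a) => ha; case: (lerP 2^-1 mu) => hm; lra.
Qed.

Section Sampling.
Variables (n N m : nat) (w : 'I_N -> R) (c : 'I_N -> input n -> R).
Hypothesis w_ge0 : forall i, 0 <= w i.
Hypothesis w_sum1 : \sum_i w i = 1.
Hypothesis c01 : forall i x, 0 <= c i x <= 1.
Hypothesis m_gt0 : (0 < m)%nat.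

Definition mix x := \sum_i w i * c i x.
Definition sample_avg (f : {ffun 'I_m -> 'I_N}) x := m%:R^-1 * \sum_j c (f j) x.
Definition draw_prob (f : {ffun 'I_m -> 'I_N}) := \prod_j w (f j).

Lemma draw_prob_ge0 f : 0 <= draw_prob f.
Proof. exact: prodr_ge0. Qed.

Lemma draw_prob_sum1 : \sum_f draw_prob f = 1.
Proof.
rewrite /draw_prob -(bigA_distr_bigA (fun (_ : 'I_m) (i : 'I_N) => w i)) /=.
by rewrite big1.
Qed.

Lemma draw_moment2 (d : 'I_N -> R) (j k : 'I_m) : \sum_i w i * d i = 0 ->
  \sum_f draw_prob f * (d (f j) * d (f k)) =
  if j == k then \sum_i w i * (d i * d i) else 0.
Proof.
move=> d0.
pose F (l : 'I_m) (i : 'I_N) :=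
  w i * ((if l == j then d i else 1) * (if l == k then d i else 1)).
have factor f : draw_prob f * (d (f j) * d (f k)) = \prod_l F l (f l).
  by rewrite /F /draw_prob !big_split /= -!big_mkcond !big_pred1_eq.
under eq_bigr do rewrite factor.
rewrite -(bigA_distr_bigA F) /= (bigD1 j) //=.
rewrite [X in X * _](_ : _ = \sum_i w i * (d i * (if j == k then d i else 1))); last first.
  by apply: eq_bigr => i _; rewrite /F eqxx.
have [jk | jk] := eqVneq j k.
  rewrite [X in _ * X]big1 ?mulr1 // => l /negbTE lj; rewrite /F -jk lj.
  by under eq_bigr do rewrite !mulr1.
rewrite [X in X * _](eq_bigr (fun i => w i * d i)) => [|i _]; last by rewrite mulr1.
by rewrite d0 mul0r.
Qed.

Lemma mix_var_le x : \sum_i w i * ((c i x - mix x) * (c i x - mix x)) <= 4^-1.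
Proof.
set mu := mix x.
have -> : \sum_i w i * ((c i x - mu) * (c i x - mu)) =
          \sum_i w i * (c i x * c i x) - mu ^+ 2.
  rewrite (eq_bigr (fun i => w i * (c i x * c i x) - (2 * mu) * (w i * c i x) + mu ^+ 2 * w i));
    last by move=> i _; ring.
  by rewrite big_split sumrB /= -!mulr_sumr w_sum1 -/(mix x) -/mu; ring.
have : \sum_i w i * (c i x * c i x) <= mu.
  apply: ler_sum => i _; apply: ler_wpM2l => //.
  by have /andP[c0 c1] := c01 i x; rewrite -[leRHS]mulr1 ler_wpM2l.
by have := sqr_ge0 (mu - 2^-1); lra.
Qed.

Lemma sample_avg_var x : \sum_f draw_prob f * (sample_avg f x - mix x) ^+ 2 <= (4 * m%:R)^-1.
Proof.
pose d i := c i x - mix x.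
have m0 : m%:R != 0 :> R by rewrite pnatr_eq0 -lt0n.
have d0 : \sum_i w i * d i = 0.
  by under eq_bigr do rewrite mulrBr; rewrite sumrB -mulr_suml w_sum1 mul1r subrr.
have dev f : (sample_avg f x - mix x) ^+ 2 =
             m%:R^-1 ^+ 2 * \sum_j \sum_k d (f j) * d (f k).
  rewrite (_ : _ - _ = m%:R^-1 * \sum_j d (f j)); last first.
    by rewrite /sample_avg /d sumrB sumr_const card_ord -mulr_natr; field.
  rewrite exprMn [X in _ * X]expr2 mulr_suml; congr (_ * _).
  by apply: eq_bigr => j _; rewrite mulr_sumr.
have -> : \sum_f draw_prob f * (sample_avg f x - mix x) ^+ 2 =
          m%:R^-1 ^+ 2 * \sum_j \sum_k \sum_f draw_prob f * (d (f j) * d (f k)).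
  under eq_bigr do rewrite dev mulrCA.
  rewrite -mulr_sumr; congr (_ * _); under eq_bigr do rewrite mulr_sumr.
  rewrite exchange_big; apply: eq_bigr => j _; under eq_bigr do rewrite mulr_sumr.
  by rewrite exchange_big.
under eq_bigr do (under eq_bigr do rewrite draw_moment2 //).
set V := \sum_i w i * (d i * d i).
have diag j : \sum_(k : 'I_m) (if j == k then V else 0) = V.
  by rewrite -big_mkcond (big_pred1 j) // => k; rewrite /= eq_sym.
under eq_bigr do rewrite diag.
rewrite sumr_const card_ord -mulr_natr (_ : _ * _ = m%:R^-1 * V); last by field.
by rewrite invfM mulrC ?mul1r; apply: ler_wpM2r; [rewrite invr_ge0 ler0n | exact: mix_var_le].
Qed.

Lemma sample_err_pointwise x eps : 0 < eps -> 1 <= 4 * m%:R * eps ^+ 2 ->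
  \sum_f draw_prob f * coin_err (mix x) (round (sample_avg f x)) <=
  coin_err (mix x) (round (mix x)) + 2 * eps.
Proof.
move=> e0 me.
set D := coin_err (mix x) (round (mix x)).
set V := \sum_f draw_prob f * (sample_avg f x - mix x) ^+ 2.
have V_le : V <= eps ^+ 2.
  apply: le_trans (sample_avg_var x) _.
  by rewrite -[leLHS]mulr1 ler_pdivrMl // mulr_gt0 // ltr0n.
apply: le_trans (_ : \sum_f draw_prob f * (D + ((sample_avg f x - mix x) ^+ 2 / eps + eps)) <= _).
  apply: ler_sum => f _; apply: ler_wpM2l; first exact: draw_prob_ge0.
  exact: coin_err_round_approx.
rewrite (eq_bigr (fun f => draw_prob f * (D + eps) +
                           draw_prob f * (sample_avg f x - mix x) ^+ 2 / eps));
  last by move=> f _; ring.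
rewrite big_split /= -mulr_suml draw_prob_sum1 mul1r -mulr_suml -/V.
have : V / eps <= eps by rewrite ler_pdivrMr // -expr2.
lra.
Qed.

Lemma sampling eps : 0 < eps -> 1 <= 4 * m%:R * eps ^+ 2 ->
  exists f : {ffun 'I_m -> 'I_N},
    Ex (fun x => coin_err (mix x) (round (sample_avg f x))) <=
    Ex (fun x => coin_err (mix x) (round (mix x))) + 2 * eps.
Proof.
move=> e0 me.
have [f fle] := exists_le_avg
  (fun f => Ex (fun x => coin_err (mix x) (round (sample_avg f x))))
  draw_prob_ge0 draw_prob_sum1.
exists f; apply: le_trans fle _.
rewrite (_ : \sum_f _ =
  Ex (fun x => \sum_f draw_prob f * coin_err (mix x) (round (sample_avg f x)))).
  by apply: Ex_le_cst => x; apply: sample_err_pointwise.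
rewrite ExE; under eq_bigr do rewrite ExE mulrCA.
rewrite -mulr_sumr; congr (_ * _); under eq_bigr do rewrite mulr_sumr.
exact: exchange_big.
Qed.

End Sampling.

(* A stochastic tree with at most k queries per path is, up to 2 eps above its
   Bayes error, matched by a single deterministic tree of depth m k: run m trees
   drawn from its mixture and output the rounded fraction of ones. *)
Lemma few_queries_approx n (T : sdt n) (k m : nat) (eps : R) :
  sdt_wf T -> (query_depth T <= k)%nat -> (0 < m)%nat -> 0 < eps ->
  1 <= 4 * m%:R * eps ^+ 2 ->
  exists Tt : dt n, (dt_depth Tt <= m * k)%nat /\ err Tt T <= opt T + 2 * eps.
Proof.
move=> wT qk m0 e0 me.
set ds := sdist T; pose a0 := (0 : R, Leaf n false).
pose w (i : 'I_(size ds)) := (nth a0 ds i).1.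
pose c (i : 'I_(size ds)) (x : input n) : R := (dt_eval (nth a0 ds i).2 x : nat)%:R.
have w_ge0 i : 0 <= w i by move/(all_nthP a0): (sdist_ge0 wT); apply.
have w_sum1 : \sum_i w i = 1 by rewrite -(sdist_sum1 T) (big_nth a0) big_mkord.
have c01 i x : 0 <= c i x <= 1 by rewrite /c; case: dt_eval; rewrite ?ler01 ?lexx.
have mixE x : mix w c x = mu T x by rewrite /mix -sdist_mu (big_nth a0) big_mkord.
have [f f_good] := sampling w_ge0 w_sum1 c01 m0 e0 me.
pose ts := [seq (nth a0 ds (f j)).2 | j <- index_enum 'I_m].
pose vote (bs : seq bool) := round (m%:R^-1 * \sum_(b <- bs) (b : nat)%:R).
exists (run_all ts vote); split.
  apply: leq_trans (run_all_depth ts vote) _.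
  apply: (@leq_trans (\sum_(j : 'I_m) k)%nat); last by rewrite sum_nat_const card_ord.
  rewrite /ts big_map; apply: leq_sum => j _.
  by move/(all_nthP a0): (sdist_depth T) => /(_ (f j) (ltn_ord _)) /leq_trans; apply.
have evalE x : dt_eval (run_all ts vote) x = round (sample_avg c f x).
  by rewrite run_all_eval /vote /sample_avg /ts !big_map.
have -> : err (run_all ts vote) T =
          Ex (fun x => coin_err (mix w c x) (round (sample_avg c f x))).
  by apply: Ex_ext => x; rewrite evalE mixE.
have -> : opt T = Ex (fun x => coin_err (mix w c x) (round (mix w c x))).
  by apply: Ex_ext => x; rewrite mixE.
exact: f_good.
Qed.

Lemma disagree_prune n (T : sdt n) k x b : sdt_wf T ->
  `|disagree T x b - disagree (prune T k [::]) x b| <= reach T k [::] x.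
Proof.
move=> wT; have prune_x := prune_err k wT (isT : consistent x [::]).
rewrite /disagree; case: b => //.
by rewrite (_ : _ - _ = - (mu T x - mu (prune T k [::]) x)) ?normrN //; ring.
Qed.

Lemma err_prune n (Tt : dt n) (T : sdt n) k : sdt_wf T ->
  err Tt T <= err Tt (prune T k [::]) + Ex (reach T k [::]).
Proof.
move=> wT; apply: Ex_leD => x.
by have := disagree_prune k x (dt_eval Tt x) wT; rewrite ler_norml; lra.
Qed.

Lemma opt_prune n (T : sdt n) k : sdt_wf T ->
  opt (prune T k [::]) <= opt T + Ex (reach T k [::]).
Proof.
move=> wT; apply: Ex_leD => x.
apply: le_trans (coin_err_round _ (round (mu T x))) _.
have := disagree_prune k x (round (mu T x)) wT.
by rewrite /disagree /coin_err; case: round; rewrite ler_norml; lra.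
Qed.

Lemma ln_mulr (a b : R) : 0 < a -> 0 < b -> ln (a * b) = ln a + ln b.
Proof. by move=> /RltP a0 /RltP b0; rewrite ln_mult. Qed.

Lemma ln_ltr (a b : R) : 0 < a -> a < b -> ln a < ln b.
Proof. by move=> /RltP a0 /RltP ab; apply/RltP; apply: ln_increasing. Qed.

Lemma ln_exprn (a : R) k : 0 < a -> ln (a ^+ k) = k%:R * ln a.
Proof. by move=> /RltP a0; rewrite -RpowE ln_pow // INRE. Qed.

Lemma half_lt_ln2 : 2^-1 < ln 2.
Proof. by have := ln_lt_2; rewrite RinvE IZRposE INRE => /RltP. Qed.

Lemma pow2_bracket (y : R) : 1 <= y -> exists d : nat, y <= 2 ^+ d /\ 2 ^+ d < 2 * y.
Proof.
move=> y1; have y0 : 0 <= y by lra.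
have ex : exists d : nat, y <= 2 ^+ d.
  exists (Num.Def.archi_bound y); apply: le_trans (ltW (archi_boundP y0)) _.
  by rewrite -natrX ler_nat ltnW // ltn_expl.
case: (ex_minnP ex) => d hd hmin; exists d; split => //.
case: d hd hmin => [|d] hd hmin; first by rewrite expr0; lra.
have : ~~ (y <= 2 ^+ d) by apply/negP => /hmin; rewrite ltnn.
by rewrite -ltNge exprS => h; lra.
Qed.

Lemma cut_budget (s eps : R) : 1 <= s -> 0 < eps -> eps < 2^-1 ->
  exists k : nat, s / 2 ^+ k <= eps / 2 /\ k%:R <= 6 * ln (s / eps).
Proof.
move=> s1 e0 e1; set X := s / eps.
have X2 : 2 < X by rewrite /X ltr_pdivlMr //; lra.
have [k [lo hi]] : exists k : nat, 2 * X <= 2 ^+ k /\ 2 ^+ k < 2 * (2 * X).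
  by apply: pow2_bracket; lra.
have K0 : 0 < 2 ^+ k :> R by rewrite exprn_gt0.
exists k; split.
  rewrite ler_pdivrMr // (_ : s = eps / 2 * (2 * X)); last by rewrite /X; field; rewrite gt_eqF.
  by apply: ler_wpM2l => //; lra.
have X0 : 0 < X by lra.
have lnK := ln_ltr K0 hi.
have two0 : 0 < 2 :> R by [].
have X20 : 0 < 2 * X by rewrite mulr_gt0.
rewrite ln_exprn // (ln_mulr two0 X20) (ln_mulr two0 X0) in lnK.
have lnX : ln 2 < ln X by apply: ln_ltr.
have ln2 := half_lt_ln2.
have : 0 <= k%:R * (ln 2 - 2^-1) by apply: mulr_ge0 => //; lra.
lra.
Qed.

Lemma sample_budget (eps : R) : 0 < eps -> eps < 2^-1 ->
  exists m : nat, [/\ (0 < m)%nat, 1 <= 4 * m%:R * eps ^+ 2 & m%:R * eps ^+ 2 <= 2^-1].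
Proof.
move=> e0 e1; have e2 : 0 < 4 * eps ^+ 2 by rewrite mulr_gt0 // exprn_gt0.
have : 1 <= (4 * eps ^+ 2)^-1.
  rewrite invf_ge1 // expr2; have := ler_wpM2l (ltW e0) (ltW e1); lra.
move=> /pow2_bracket [d [lo hi]]; exists (expn 2 d).
have -> : (expn 2 d)%:R = 2 ^+ d :> R by rewrite natrX.
split.
- by rewrite expn_gt0.
- by move: lo; rewrite -[leLHS]mulr1 ler_pdivrMl // mulrAC.
- by move: hi; rewrite ltr_pdivlMr //; lra.
Qed.

Theorem corollary7 :
  exists C : R, 0 < C /\
  forall (n : nat) (T : sdt n) (eps : R),
    sdt_wf T -> 0 < eps < 2^-1 ->
    exists Tt : dt n,
      (dt_depth Tt)%:R <= C * ln ((sdt_size T)%:R / eps) / eps ^+ 2 /\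
      err Tt T <= opt T + 3 * eps.
Proof.
exists 4; split => [|n T eps wT /andP[e0 e1]]; first lra.
have s1 : 1 <= (sdt_size T)%:R :> R by rewrite ler1n sdt_size_gt0.
have [k [cut_small k_le]] := cut_budget s1 e0 e1.
have [m [m0 m_big m_small]] := sample_budget e0 e1.
have [Tt [depth_Tt err_Tt]] :=
  few_queries_approx (prune_wf k [::] wT) (query_depth_prune T k [::]) m0 e0 m_big.
exists Tt; split.
  have e2 : 0 < eps ^+ 2 by rewrite exprn_gt0.
  rewrite ler_pdivlMr //; apply: le_trans (_ : (m * k)%:R * eps ^+ 2 <= _).
    by rewrite ler_wpM2r ?ler_nat // ltW.
  have k0 := ler0n R k; rewrite natrM mulrAC; have := ler_wpM2r k0 m_small; lra.
have reach_small : Ex (reach T k [::]) <= eps / 2 := le_trans (Ex_reach k wT) cut_small.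
have := err_prune Tt k wT; have := opt_prune k wT; lra.
Qed.
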